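(* Let $G<\operatorname{Aut}(T)$ be the group generated by the automorphisms $a,b,c$ of the $6$-ary rooted tree $T=\{1,\dots,6\}^*$ defined by $a=\langle\!\langle b^{-1},1,b,c^{-1},1,c\rangle\!\rangle(13)(25)(46)$, $b=\langle\!\langle b,b^{-1},1,c,c^{-1},1\rangle\!\rangle(2356)$, $c=(123)(456)$. Then for every $n\in\mathbb{N}$, $G$ contains a subgroup isomorphic to $\mathbb{Z}^n$.
   Context: $T$ is the tree of finite words over $X=\{1,\dots,6\}$; automorphisms act on the right. The wreath recursion $g=\langle\!\langle g_1,\dots,g_6\rangle\!\rangle\sigma$ means $(xv)^g=x^\sigma v^{g_x}$ for $x\in X$, $v\in X^*$. (This $G$ is $\operatorname{IMG}(f_1)$ for $f_1(z)=\frac{2(z^2-3/4)^3}{z^2(z^2-9/8)^2}-1$.) *)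

From mathcomp Require Import all_boot all_algebra.
Set Implicit Arguments. Unset Strict Implicit. Unset Printing Implicit Defensive.

Inductive letter := x1 | x2 | x3 | x4 | x5 | x6.

Definition vertex := seq letter.

Inductive gen := ga | gb | gc.

(* Words over the generators and their inverses: (g, false) is g, (g, true) is g^-1.
   A word s1 s2 ... sk denotes the product s1 * s2 * ... * sk (right action:
   first s1 acts, then s2, ...). *)
Definition gword := seq (gen * bool).

Definition inv_word (w : gword) : gword :=
  rev (map (fun s => (s.1, ~~ s.2)) w).

Definition perm_gen (g : gen) (x : letter) : letter :=
  match g, x with
  | ga, x1 => x3 | ga, x3 => x1 | ga, x2 => x5 | ga, x5 => x2
  | ga, x4 => x6 | ga, x6 => x4
  | gb, x2 => x3 | gb, x3 => x5 | gb, x5 => x6 | gb, x6 => x2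
  | gb, x1 => x1 | gb, x4 => x4
  | gc, x1 => x2 | gc, x2 => x3 | gc, x3 => x1
  | gc, x4 => x5 | gc, x5 => x6 | gc, x6 => x4
  end.

Definition perm_gen_inv (g : gen) (x : letter) : letter :=
  match g, x with
  | ga, x1 => x3 | ga, x3 => x1 | ga, x2 => x5 | ga, x5 => x2
  | ga, x4 => x6 | ga, x6 => x4
  | gb, x3 => x2 | gb, x5 => x3 | gb, x6 => x5 | gb, x2 => x6
  | gb, x1 => x1 | gb, x4 => x4
  | gc, x2 => x1 | gc, x3 => x2 | gc, x1 => x3
  | gc, x5 => x4 | gc, x6 => x5 | gc, x4 => x6
  end.

Definition sec_gen (g : gen) (x : letter) : gword :=
  match g, x with
  | ga, x1 => [:: (gb, true)] | ga, x2 => [::] | ga, x3 => [:: (gb, false)]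
  | ga, x4 => [:: (gc, true)] | ga, x5 => [::] | ga, x6 => [:: (gc, false)]
  | gb, x1 => [:: (gb, false)] | gb, x2 => [:: (gb, true)] | gb, x3 => [::]
  | gb, x4 => [:: (gc, false)] | gb, x5 => [:: (gc, true)] | gb, x6 => [::]
  | gc, _ => [::]
  end.

(* One generator (or inverse) acting on a first letter: image letter and section.
   For g^-1: x^(g^-1) = y with y^g = x, and (g^-1)|_x = (g|_y)^-1. *)
Definition step (s : gen * bool) (x : letter) : letter * gword :=
  let (g, inv) := s in
  if inv then let y := perm_gen_inv g x in (y, inv_word (sec_gen g y))
  else (perm_gen g x, sec_gen g x).

(* A word acting on a first letter: x^(gh) = (x^g)^h, (gh)|_x = g|_x h|_(x^g). *)
Fixpoint step_word (w : gword) (x : letter) : letter * gword :=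
  match w with
  | [::] => (x, [::])
  | s :: w' =>
      let (y, s1) := step s x in
      let (z, s2) := step_word w' y in (z, s1 ++ s2)
  end.

Fixpoint act (w : gword) (v : vertex) : vertex :=
  match v with
  | [::] => [::]
  | x :: v' => let (y, s) := step_word w x in y :: act s v'
  end.

Definition in_G (f : vertex -> vertex) : Prop := exists w : gword, act w = f.

(* G contains a subgroup isomorphic to Z^n: there is an injective group
   homomorphism Z^n -> G.  The product g*h in G (right action) is the map
   "first g then h", i.e. h \o g. *)
Definition contains_Zn (n : nat) : Prop :=
  exists phi : 'rV[int]_n -> (vertex -> vertex),
    [/\ forall u, in_G (phi u),
        forall u v, phi (u + v)%R = phi v \o phi u
      & injective phi].

From HB Require Import structures.
From mathcomp Require Import all_boot all_algebra zify.
From Stdlib Require Import FunctionalExtensionality.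
Set Implicit Arguments. Unset Strict Implicit. Unset Printing Implicit Defensive.
Import GRing.Theory.

(* Write h = b^3 c^-1.  A computation shows that h^2 fixes the first level, with
   section h at x1, h^c at x3, and sections of order dividing 9 or 24 at the other
   letters.  Hence h has infinite order (odd powers swap x1 and x3), and h^(144 m)
   acts only below x1 and x3, as h^(72 m) and (h^c)^(72 m).  The commutator
   rho = [(h^c)^144, c] fixes x3 with section h^72, so it has infinite order too.
   A substitution on words in c, b c b^-1 and b^2 produces elements V_k fixing x1
   and x3, with V_0 acting as c below x3 and trivially below x1, and V_(k+1)
   acting as V_k below x1 and trivially below x3.  Then
   A_k = [h^(144 2^(k+1)), V_k] acts as rho below the vertex x1^k x3 and trivially
   elsewhere.  These supports are disjoint, so z |-> A_0^z_0 ... A_(n-1)^z_(n-1)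
   embeds Z^n into G.
   All identities between explicit words are checked by computation: a word acts
   trivially as soon as it lies in a finite set of freely reduced words that is
   closed under sections and whose members fix the first level. *)

(** * Words acting on the tree *)

Definition letter_eqb (x y : letter) : bool :=
  match x, y with
  | x1, x1 | x2, x2 | x3, x3 | x4, x4 | x5, x5 | x6, x6 => true
  | _, _ => false
  end.

Lemma letter_eqbP : Equality.axiom letter_eqb.
Proof. by case; case; constructor. Qed.

HB.instance Definition _ := hasDecEq.Build letter letter_eqbP.

Definition gen_eqb (g h : gen) : bool :=
  match g, h with ga, ga | gb, gb | gc, gc => true | _, _ => false end.

Lemma gen_eqbP : Equality.axiom gen_eqb.
Proof. by case; case; constructor. Qed.

HB.instance Definition _ := hasDecEq.Build gen gen_eqbP.

Definition letters : seq letter := [:: x1; x2; x3; x4; x5; x6].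

Lemma mem_letters x : x \in letters.
Proof. by case: x. Qed.

Definition inv_letter (s : gen * bool) : gen * bool := (s.1, ~~ s.2).

Lemma inv_word_cat w1 w2 : inv_word (w1 ++ w2) = inv_word w2 ++ inv_word w1.
Proof. by rewrite /inv_word map_cat rev_cat. Qed.

Lemma inv_wordK : involutive inv_word.
Proof.
move=> w; rewrite /inv_word map_rev revK -map_comp -[RHS]map_id.
by apply: eq_map => -[g b] /=; rewrite negbK.
Qed.

Lemma step_word_cat w1 w2 x :
  step_word (w1 ++ w2) x =
  let (y, s1) := step_word w1 x in let (z, s2) := step_word w2 y in (z, s1 ++ s2).
Proof.
elim: w1 x => [|s w1 IH] x /=; first by case: (step_word w2 x).
case: (step s x) => y s1; rewrite IH.
case: (step_word w1 y) => z s2; case: (step_word w2 z) => u s3.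
by rewrite catA.
Qed.

Lemma act_nil : act [::] =1 id.
Proof. by elim=> //= x v ->. Qed.

Lemma act_cat w1 w2 v : act (w1 ++ w2) v = act w2 (act w1 v).
Proof.
elim: v w1 w2 => [|x v IH] w1 w2 //=.
rewrite step_word_cat.
case: (step_word w1 x) => y s1 /=; case: (step_word w2 y) => z s2.
by rewrite IH.
Qed.

Lemma act_cons w x u :
  act w (x :: u) = (step_word w x).1 :: act (step_word w x).2 u.
Proof. by rewrite /=; case: (step_word w x). Qed.

Lemma step_word_inv w x :
  step_word (inv_word w) (step_word w x).1 = (x, inv_word (step_word w x).2).
Proof.
elim: w x => [|s w IH] x //=.
rewrite /inv_word rev_cons -cats1 -/(inv_word w) step_word_cat.
case E1: (step s x) => [y s1]; case E2: (step_word w y) => [z s2].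
have IHy := IH y; rewrite E2 /= in IHy.
have step_inv : step_word [:: inv_letter s] y = (x, inv_word s1).
  by move: E1; case: s => -[] []; case: x => -[<- <-].
by rewrite -[(z, _).1]/z IHy step_inv -inv_word_cat.
Qed.

Lemma act_invK w : cancel (act w) (act (inv_word w)).
Proof.
move=> v; elim: v w => [|x v IH] w //=.
have := step_word_inv w x.
by case: (step_word w x) => y s /= ->; rewrite IH.
Qed.

Lemma act_invVK w : cancel (act (inv_word w)) (act w).
Proof. by move=> v; rewrite -{1}(inv_wordK w) act_invK. Qed.

(** * Certified identities *)

Fixpoint reduce (w : gword) : gword :=
  if w is s :: w' then
    if reduce w' is t :: r then (if t == inv_letter s then r else s :: t :: r)
    else [:: s]
  else [::].

Lemma act_reduce w : act (reduce w) =1 act w.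
Proof.
elim: w => [|s w IH] v //=.
rewrite -[s :: w]cat1s act_cat -IH.
case: (reduce w) => [|t r]; first by rewrite act_nil.
case: eqP => [->|_]; last by rewrite -[s :: _]cat1s act_cat.
by rewrite -[_ :: r]cat1s act_cat (act_invK [:: s]).
Qed.

Definition section_closed (S : seq gword) : bool :=
  all (fun w => all (fun x =>
         ((step_word w x).1 == x) && (reduce (step_word w x).2 \in S)) letters) S.

Lemma section_closed_act S : section_closed S -> {in S, forall w, act w =1 id}.
Proof.
move=> /allP closedS w Sw v; elim: v w Sw => [|x v IH] w Sw //=.
have /allP/(_ x (mem_letters x))/andP[/eqP fix_x red_in] := closedS w Sw.
case: (step_word w x) fix_x red_in => y s /= -> /IH.
by rewrite act_reduce => ->.
Qed.

Definition certifies_trivial (S : seq gword) (w : gword) : bool :=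
  section_closed S && (reduce w \in S).

Lemma certifies_trivialP S w : certifies_trivial S w -> act w =1 id.
Proof.
move=> /andP[closedS wS] v.
by rewrite -act_reduce (section_closed_act closedS wS).
Qed.

Definition sections (w : gword) : seq gword :=
  [seq reduce (step_word w x).2 | x <- letters].

(* Breadth-first search; running out of fuel only makes the check below fail. *)
Fixpoint closure (fuel : nat) (todo found : seq gword) : seq gword :=
  if fuel is fuel'.+1 then
    if todo is w :: todo' then
      if w \in found then closure fuel' todo' found
      else closure fuel' (todo' ++ sections w) (w :: found)
    else found
  else found.

(* [trivial_word] and [eq_word] must only be unfolded explicitly: unification
   that unfolds [closure] on an open word does not terminate in practice. *)
Definition trivial_word (w : gword) : bool :=
  certifies_trivial (closure 2000 [:: reduce w] [::]) w.

Lemma trivial_wordP w : trivial_word w -> act w =1 id.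
Proof. exact: certifies_trivialP. Qed.

Definition eq_word (w1 w2 : gword) : bool := trivial_word (w1 ++ inv_word w2).

Lemma eq_wordP w1 w2 : eq_word w1 w2 -> act w1 =1 act w2.
Proof.
rewrite /eq_word => /trivial_wordP triv v.
have := triv v; rewrite act_cat => inv_w2_w1.
by rewrite -[act w1 v](act_invVK w2) inv_w2_w1.
Qed.

Fixpoint pow (w : gword) (n : nat) : gword :=
  if n is n'.+1 then w ++ pow w n' else [::].

Lemma pow_add w m n : pow w (m + n) = pow w m ++ pow w n.
Proof. by elim: m => //= m ->; rewrite catA. Qed.

Lemma pow_mul w m n : pow w (m * n) = pow (pow w m) n.
Proof. by elim: n => [|n IH]; rewrite ?muln0 //= mulnS pow_add IH. Qed.

Lemma pow_nil n : pow [::] n = [::].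
Proof. by elim: n. Qed.

Lemma act_pow_conj s w n v :
  act (pow (inv_word s ++ w ++ s) n) v = act s (act (pow w n) (act (inv_word s) v)).
Proof.
elim: n v => [|n IH] v /=; first by rewrite !act_nil act_invVK.
by rewrite !act_cat IH /= act_invK.
Qed.

(** * Sections, commutators and local actions *)

Definition fixes_with (w : gword) (x : letter) (s : gword) : Prop :=
  forall u, act w (x :: u) = x :: act s u.

Lemma fixes_with_cat w1 w2 s1 s2 x :
  fixes_with w1 x s1 -> fixes_with w2 x s2 -> fixes_with (w1 ++ w2) x (s1 ++ s2).
Proof. by move=> fix1 fix2 u; rewrite !act_cat fix1 fix2. Qed.

Lemma fixes_with_pow w s x n :
  fixes_with w x s -> fixes_with (pow w n) x (pow s n).
Proof.
move=> fix_w; elim: n => [|n IH] /=; first by move=> u; rewrite !act_nil.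
exact: fixes_with_cat.
Qed.

Lemma fixes_with_inv w s x :
  fixes_with w x s -> fixes_with (inv_word w) x (inv_word s).
Proof. by move=> fix_w u; rewrite -{1}(act_invVK s u) -fix_w act_invK. Qed.

Definition fixes_withb (w : gword) (x : letter) (s : gword) : bool :=
  ((step_word w x).1 == x) && eq_word (step_word w x).2 s.

Lemma fixes_withbP w x s : fixes_withb w x s -> fixes_with w x s.
Proof.
case/andP=> /eqP fix_x /eq_wordP E u /=.
by case: (step_word w x) fix_x E => y t /= -> ->.
Qed.

Definition commw (p v : gword) : gword := inv_word p ++ inv_word v ++ p ++ v.

Lemma act_commw p v u :
  act (commw p v) u = act v (act p (act (inv_word v) (act (inv_word p) u))).
Proof. by rewrite !act_cat. Qed.

Lemma act_commw_nil p : act (commw p [::]) =1 id.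
Proof. by move=> u; rewrite act_commw !act_nil act_invVK. Qed.

Lemma fixes_with_commw p v p' v' x :
  fixes_with p x p' -> fixes_with v x v' -> fixes_with (commw p v) x (commw p' v').
Proof.
move=> fix_p fix_v; apply: fixes_with_cat (fixes_with_inv fix_p) _.
by apply: fixes_with_cat (fixes_with_inv fix_v) _; apply: fixes_with_cat.
Qed.

Definition below (x : letter) (f : vertex -> vertex) (v : vertex) : vertex :=
  if v is y :: u then (if y == x then x :: f u else v) else v.

Lemma eq_below x f g : f =1 g -> below x f =1 below x g.
Proof. by move=> E [|y u] //=; rewrite E. Qed.

Lemma below_comp x f g v : below x (f \o g) v = below x f (below x g v).
Proof.
case: v => [|y u] //=.
by case: (eqVneq y x) => [<-|/negPf neq_yx]; rewrite /= ?eqxx ?neq_yx.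
Qed.

Lemma below_id x v : below x id v = v.
Proof. by case: v => [|y u] //=; case: (eqVneq y x) => [<-|]. Qed.

Lemma below_comm x y f g v :
  x != y -> below x f (below y g v) = below y g (below x f v).
Proof.
move=> neq_xy; case: v => [|z u] //=.
have neq_yx : (y == x) = false by rewrite eq_sym (negPf neq_xy).
have [->|neq_zy] := eqVneq z y; first by rewrite neq_yx /= neq_yx eqxx.
have [->|neq_zx] := eqVneq z x; first by rewrite /= eqxx (negPf neq_xy).
by rewrite /= (negPf neq_zx) (negPf neq_zy).
Qed.

Section CommutatorSplit.

Variables (x y : letter) (p v p1 p2 v1 v2 : gword).
Hypotheses (neq_xy : x != y)
  (p_trivial : forall z, z \notin [:: x; y] -> fixes_with p z [::])
  (p_x : fixes_with p x p1) (p_y : fixes_with p y p2)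
  (v_x : fixes_with v x v1) (v_y : fixes_with v y v2).

Lemma act_commw_split :
  act (commw p v) =1 below x (act (commw p1 v1)) \o below y (act (commw p2 v2)).
Proof.
have neq_yx : (y == x) = false by rewrite eq_sym (negPf neq_xy).
case=> [|z u] //; rewrite [RHS]/=.
have [->|neq_zy] := eqVneq z y; first by rewrite (fixes_with_commw p_y v_y) [RHS]/= neq_yx.
have [->|neq_zx] := eqVneq z x.
  by rewrite (fixes_with_commw p_x v_x) [RHS]/= eqxx.
rewrite [RHS]/= (negPf neq_zx).
have z_out : z \notin [:: x; y] by rewrite !inE negb_or neq_zx.
rewrite act_commw (fixes_with_inv (p_trivial z_out)) act_nil act_cons.
set z' := (step_word (inv_word v) z).1; set u' := act _ u.
have v_z' : act v (z' :: u') = z :: u by rewrite /z' /u' -act_cons act_invVK.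
have z'_out : z' \notin [:: x; y].
  rewrite !inE negb_or; apply/andP; split; apply/eqP => eq_z'.
    by move: v_z'; rewrite eq_z' v_x => -[/esym/eqP]; rewrite (negPf neq_zx).
  by move: v_z'; rewrite eq_z' v_y => -[/esym/eqP]; rewrite (negPf neq_zy).
by rewrite (p_trivial z'_out) act_nil.
Qed.

End CommutatorSplit.

Definition functorial (L : (vertex -> vertex) -> vertex -> vertex) : Prop :=
  [/\ forall f g, f =1 g -> L f =1 L g,
      forall f g, L (f \o g) =1 L f \o L g
    & L id =1 id].

Lemma below_functorial x : functorial (below x).
Proof. by split; [apply: eq_below | apply: below_comp | apply: below_id]. Qed.

Lemma functorial_comp L1 L2 : functorial L1 -> functorial L2 -> functorial (L1 \o L2).
Proof.
move=> [ext1 comp1 id1] [ext2 comp2 id2]; split=> [f g E|f g|] v.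
- exact: ext1 _ _ (ext2 _ _ E) v.
- exact: etrans (ext1 _ _ (comp2 f g) v) (comp1 _ _ v).
- exact: etrans (ext1 _ _ id2 v) (id1 v).
Qed.

Lemma functorial_iter L k : functorial L -> functorial (iter k L).
Proof.
move=> fL; elim: k => [|k IH]; first by split.
exact: (functorial_comp fL IH).
Qed.

Section FunctorialLift.

Variables (L : (vertex -> vertex) -> vertex -> vertex) (w s : gword).
Hypotheses (L_functorial : functorial L) (act_w : act w =1 L (act s)).

Lemma act_pow_lift n : act (pow w n) =1 L (act (pow s n)).
Proof.
case: L_functorial => L_ext L_comp L_id.
elim: n => [|n IH] v /=; first by rewrite act_nil (L_ext _ _ act_nil v) L_id.
rewrite act_cat IH act_w -[LHS]/((L (act (pow s n)) \o L (act s)) v) -L_comp.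
by apply: L_ext => u; rewrite act_cat.
Qed.

Lemma act_inv_lift : act (inv_word w) =1 L (act (inv_word s)).
Proof.
case: L_functorial => L_ext L_comp L_id v.
have act_w_lift : act w (L (act (inv_word s)) v) = v.
  rewrite act_w -[LHS]/((L (act s) \o L (act (inv_word s))) v) -L_comp.
  by rewrite (L_ext _ _ (act_invVK s) v) L_id.
by rewrite -{1}act_w_lift act_invK.
Qed.

End FunctorialLift.

Definition powz (w : gword) (z : int) : gword :=
  match z with Posz n => pow w n | Negz n => pow (inv_word w) n.+1 end.

Lemma act_powz_lift L w s :
  functorial L -> act w =1 L (act s) -> forall z, act (powz w z) =1 L (act (powz s z)).
Proof.
move=> fL act_w [n|n]; first exact: act_pow_lift.
exact/act_pow_lift/act_inv_lift.
Qed.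

Local Open Scope ring_scope.

Lemma act_powz_succ w z v : act (powz w (z + 1)) v = act w (act (powz w z) v).
Proof.
have act_pow_succ u n : act (pow u n.+1) v = act u (act (pow u n) v).
  by rewrite -addn1 pow_add act_cat /= cats0.
case: z => [n|[|n]].
- by rewrite (_ : n%:Z + 1 = n.+1%:Z) ?act_pow_succ //; lia.
- by rewrite (_ : Negz 0 + 1 = 0) /= ?cats0 ?act_invVK ?act_nil //; lia.
- by rewrite (_ : Negz n.+1 + 1 = Negz n) ?(act_pow_succ _ n.+1) ?act_invVK //; lia.
Qed.

Lemma act_powz_pred w z v :
  act (powz w (z - 1)) v = act (inv_word w) (act (powz w z) v).
Proof. by rewrite -{2}(subrK 1 z) act_powz_succ act_invK. Qed.

Lemma act_powz_add w a b v :
  act (powz w (a + b)) v = act (powz w b) (act (powz w a) v).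
Proof.
case: b => n; elim: n v => [|n IH] v.
- by rewrite addr0 /= act_nil.
- rewrite (_ : a + n.+1%:Z = a + n%:Z + 1); last by lia.
  by rewrite act_powz_succ IH -act_powz_succ; congr (act (powz w _) _); lia.
- by rewrite (_ : a + Negz 0 = a - 1) ?act_powz_pred /= ?cats0 //; lia.
- rewrite (_ : a + Negz n.+1 = a + Negz n - 1); last by lia.
  by rewrite act_powz_pred IH -act_powz_pred (_ : Negz n - 1 = Negz n.+1) //; lia.
Qed.

Lemma act_pow_absz_id w z : act (powz w z) =1 id -> act (pow w `|z|) =1 id.
Proof.
case: z => n triv //= v.
have := act_powz_add w (Negz n) n.+1 v; rewrite triv.
by rewrite (_ : Negz n + n.+1%:Z = 0) ?act_nil //; lia.
Qed.

Local Close Scope ring_scope.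

(** * The elements h and rho *)

Definition cw : gword := [:: (gc, false)].
Definition hw : gword := [:: (gb, false); (gb, false); (gb, false); (gc, true)].
Definition hcw : gword := inv_word cw ++ hw ++ cw.

Lemma hw2_x1 : fixes_withb (pow hw 2) x1 hw. Proof. by vm_compute. Qed.
Lemma hw2_x3 : fixes_withb (pow hw 2) x3 hcw. Proof. by vm_compute. Qed.
(* The sections of h^2 at x2, x5 have order dividing 9, at x4, x6 dividing 24. *)
Lemma hw144_off x : x \notin [:: x1; x3] -> fixes_withb (pow hw 144) x [::].
Proof. by case: x => // _; vm_compute. Qed.

Lemma hw_pow_x1 m : fixes_with (pow hw (2 * m)) x1 (pow hw m).
Proof. by rewrite pow_mul; apply/fixes_with_pow/fixes_withbP/hw2_x1. Qed.

Lemma hw_pow_x3 m : fixes_with (pow hw (2 * m)) x3 (pow hcw m).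
Proof. by rewrite pow_mul; apply/fixes_with_pow/fixes_withbP/hw2_x3. Qed.

Lemma hw_pow_off m x : x \notin [:: x1; x3] -> fixes_with (pow hw (2 * (72 * m))) x [::].
Proof.
move=> x_off; rewrite mulnA -[2 * 72]/144 pow_mul -(pow_nil m).
exact/fixes_with_pow/fixes_withbP/hw144_off.
Qed.

Lemma hw_infinite_order m : act (pow hw m) =1 id -> m = 0.
Proof.
elim/ltn_ind: m => m IH triv.
have := odd_double_half m; set k := m./2; case: (odd m) => m_eq.
  have := triv [:: x1]; rewrite -m_eq pow_add act_cat -mul2n.
  by rewrite (_ : act (pow hw 1) [:: x1] = [:: x3]) // hw_pow_x3.
have triv_k : act (pow hw k) =1 id.
  by move=> u; have := triv (x1 :: u); rewrite -m_eq add0n -mul2n hw_pow_x1 => -[].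
have [k0|k_pos] := posnP k; first by rewrite -m_eq k0.
have k_lt_m : k < m by rewrite -m_eq /=; lia.
by move: k_pos; rewrite (IH k k_lt_m triv_k).
Qed.

Definition rhow : gword := commw (pow hcw 144) cw.

Lemma act_c x u : act cw (x :: u) = perm_gen gc x :: u.
Proof. by case: x; rewrite /= act_nil. Qed.

Lemma act_cV x u : act (inv_word cw) (x :: u) = perm_gen_inv gc x :: u.
Proof. by case: x; rewrite /= act_nil. Qed.

Lemma hcw144_x3 : fixes_with (pow hcw 144) x3 [::].
Proof.
move=> u; rewrite act_pow_conj act_cV.
by rewrite (hw_pow_off 1 (x := x2)) // act_c.
Qed.

Lemma rhow_x3 : fixes_with rhow x3 (pow hw 72).
Proof.
move=> u; rewrite act_commw (fixes_with_inv hcw144_x3) act_nil act_cV.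
by rewrite act_pow_conj act_cV (hw_pow_x1 72) !act_c.
Qed.

Lemma rhow_powz_id z : act (powz rhow z) =1 id -> z = 0%R.
Proof.
move=> /act_pow_absz_id triv; apply/eqP; rewrite -absz_eq0; apply/eqP.
have: 72 * `|z| = 0; last by lia.
apply: hw_infinite_order => u.
by have := triv (x3 :: u); rewrite (fixes_with_pow _ rhow_x3) -pow_mul => -[].
Qed.

Lemma rhow_powz_inj a b : act (powz rhow a) =1 act (powz rhow b) -> a = b.
Proof.
move=> eq_ab; apply/eqP; rewrite -subr_eq0; apply/eqP/rhow_powz_id => u.
have surj : act (powz rhow b) (act (powz rhow (- b)) u) = u.
  by rewrite -act_powz_add addNr act_nil.
by rewrite -{1}surj -act_powz_add (addrC b) subrK eq_ab surj.
Qed.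

(** * Self-replicating commutators *)

Section Substitution.

Variable T : Type.

Definition inv_tword (u : seq (T * bool)) : seq (T * bool) :=
  rev [seq (t.1, ~~ t.2) | t <- u].

Definition eval_tword (val : T -> gword) (u : seq (T * bool)) : gword :=
  flatten [seq if t.2 then inv_word (val t.1) else val t.1 | t <- u].

Definition subst_tword (tau : T -> seq (T * bool)) (u : seq (T * bool)) :=
  flatten [seq if t.2 then inv_tword (tau t.1) else tau t.1 | t <- u].

Lemma eval_tword_cat val u1 u2 :
  eval_tword val (u1 ++ u2) = eval_tword val u1 ++ eval_tword val u2.
Proof. by rewrite /eval_tword map_cat flatten_cat. Qed.

Lemma eval_tword_cons val t u :
  eval_tword val (t :: u) = (if t.2 then inv_word (val t.1) else val t.1) ++ eval_tword val u.
Proof. by []. Qed.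

Lemma eval_inv_tword val u : eval_tword val (inv_tword u) = inv_word (eval_tword val u).
Proof.
elim: u => [|[t b] u IH] //.
rewrite /inv_tword map_cons rev_cons -cats1 -/(inv_tword u) eval_tword_cat IH.
rewrite !eval_tword_cons cats0 inv_word_cat.
by case: b; rewrite /= ?inv_wordK.
Qed.

Lemma eval_subst_tword val tau u :
  eval_tword val (subst_tword tau u) = eval_tword (eval_tword val \o tau) u.
Proof.
elim: u => [|[t b] u IH] //.
have -> : subst_tword tau ((t, b) :: u) =
          (if b then inv_tword (tau t) else tau t) ++ subst_tword tau u by [].
by rewrite eval_tword_cat IH eval_tword_cons; case: b; rewrite ?eval_inv_tword.
Qed.

Lemma eval_tword_nil u : eval_tword (fun=> [::]) u = [::].
Proof. by elim: u => [|[t []] u IH]. Qed.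

Lemma fixes_with_eval x val sec u :
  (forall t, fixes_with (val t) x (sec t)) ->
  fixes_with (eval_tword val u) x (eval_tword sec u).
Proof.
move=> fix_val; elim: u => [|[t b] u IH] /=; first by move=> v; rewrite !act_nil.
apply: fixes_with_cat IH; case: b => /=; [apply: fixes_with_inv|]; exact: fix_val.
Qed.

End Substitution.

Inductive vgen := vc | vy | vz.

Definition vval (t : vgen) : gword :=
  match t with
  | vc => cw
  | vy => [:: (gb, false); (gc, false); (gb, true)]
  | vz => [:: (gb, false); (gb, false)]
  end.

Definition vsubst (t : vgen) : seq (vgen * bool) :=
  match t with
  | vc => [:: (vc,false); (vz,true); (vy,false); (vz,true); (vz,true); (vz,true);
              (vz,true); (vy,false); (vc,false)]
  | vy => [:: (vy,false); (vc,false); (vz,true); (vz,true); (vy,false); (vc,false);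
              (vc,false); (vz,true); (vy,false); (vz,true); (vz,true); (vz,true);
              (vz,true); (vy,false); (vc,false); (vc,true); (vy,true); (vz,false);
              (vz,false); (vc,true); (vy,true)]
  | vz => [:: (vy,false); (vc,false); (vz,true); (vz,true); (vy,false); (vc,false);
              (vc,true); (vy,true); (vz,false); (vz,false); (vz,false); (vz,false);
              (vy,true); (vz,false); (vc,true); (vc,true); (vy,true); (vz,false);
              (vz,false); (vc,true); (vy,true); (vc,true); (vy,true); (vz,false);
              (vz,false); (vz,false); (vz,false); (vy,true); (vz,false); (vc,true)]
  end.

Definition v0 : seq (vgen * bool) :=
  [:: (vz,false); (vc,false); (vz,true); (vz,true); (vz,true); (vz,true); (vy,false)].

Definition vw (k : nat) : gword := eval_tword vval (iter k (subst_tword vsubst) v0).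

Lemma vsubst_x1 t : fixes_withb (eval_tword vval (vsubst t)) x1 (vval t).
Proof. by case: t; vm_compute. Qed.

Lemma vsubst_x3 t : fixes_withb (eval_tword vval (vsubst t)) x3 [::].
Proof. by case: t; vm_compute. Qed.

Lemma v0_x1 : fixes_withb (vw 0) x1 [::]. Proof. by vm_compute. Qed.
Lemma v0_x3 : fixes_withb (vw 0) x3 cw. Proof. by vm_compute. Qed.

Lemma vw_x1 k : fixes_with (vw k.+1) x1 (vw k).
Proof.
rewrite /vw iterS eval_subst_tword; apply: fixes_with_eval => t.
exact/fixes_withbP/vsubst_x1.
Qed.

Lemma vw_x3 k : fixes_with (vw k.+1) x3 [::].
Proof.
rewrite /vw iterS eval_subst_tword -(eval_tword_nil (iter k (subst_tword vsubst) v0)).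
apply: fixes_with_eval => t.
exact/fixes_withbP/vsubst_x3.
Qed.

Definition pw (k : nat) : gword := pow hw (2 * (72 * 2 ^ k.+1)).

Definition aw (k : nat) : gword := commw (pw k) (vw k).

Lemma pw_x1 k : fixes_with (pw k.+1) x1 (pw k).
Proof. by rewrite /pw [2 ^ k.+2]expnS [72 * _]mulnCA; apply: hw_pow_x1. Qed.

Lemma act_aw k : act (aw k) =1 iter k (below x1) (below x3 (act rhow)).
Proof.
have neq13 : x1 != x3 by [].
elim: k => [|k IH] v.
  rewrite (act_commw_split neq13 (hw_pow_off _) (hw_pow_x1 _) (hw_pow_x3 _)
            (fixes_withbP v0_x1) (fixes_withbP v0_x3)) /comp.
  by rewrite (eq_below _ (act_commw_nil _)) below_id.
rewrite (act_commw_split neq13 (hw_pow_off _) (pw_x1 k) (hw_pow_x3 _) (vw_x1 k) (vw_x3 k)) /comp.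
by rewrite (eq_below _ (act_commw_nil _)) below_id (eq_below _ IH).
Qed.

(** * Commuting copies of rho *)

Fixpoint ladder (zs : seq int) : vertex -> vertex :=
  if zs is z :: zs' then below x1 (ladder zs') \o below x3 (act (powz rhow z)) else id.

Fixpoint ladder_word (k : nat) (zs : seq int) : gword :=
  if zs is z :: zs' then powz (aw k) z ++ ladder_word k.+1 zs' else [::].

Lemma act_ladder_word k zs : act (ladder_word k zs) =1 iter k (below x1) (ladder zs).
Proof.
elim: zs k => [|z zs IH] k v /=.
  by case: (functorial_iter k (below_functorial x1)) => _ _ ->; rewrite act_nil.
have lift_aw := act_powz_lift (L := iter k (below x1) \o below x3)
  (functorial_comp (functorial_iter k (below_functorial x1)) (below_functorial x3)) (act_aw k).
case: (functorial_iter k (below_functorial x1)) => _ iter_comp _.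
by rewrite act_cat IH iterSr lift_aw; exact: esym (iter_comp _ _ v).
Qed.

Lemma ladder_add (T : Type) (s : seq T) f g v :
  ladder [seq (f i + g i)%R | i <- s] v =
  ladder [seq g i | i <- s] (ladder [seq f i | i <- s] v).
Proof.
elim: s v => [|i s IH] v //=.
rewrite (below_comm (x := x3) (y := x1)) // -!below_comp.
by rewrite (eq_below _ IH) (eq_below _ (act_powz_add rhow (f i) (g i))).
Qed.

Lemma ladder_inj (T : eqType) (s : seq T) f g :
  ladder [seq f i | i <- s] =1 ladder [seq g i | i <- s] ->
  {in s, forall i, act (powz rhow (f i)) =1 act (powz rhow (g i))}.
Proof.
elim: s => [|j s IH] E i //; rewrite inE => /orP[/eqP -> | i_s] u.
  by have /= [] := E (x3 :: u).
by apply: IH i_s u => v; have /= [] := E (x1 :: v).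
Qed.

Theorem corollary11p7 : forall n : nat, contains_Zn n.
Proof.
move=> n; pose zs (u : 'rV[int]_n) := [seq u ord0 i | i <- enum 'I_n].
exists (fun u => act (ladder_word 0 (zs u))); split.
- by move=> u; exists (ladder_word 0 (zs u)).
- move=> u v; apply: functional_extensionality => w /=.
  rewrite !act_ladder_word /= -ladder_add.
  by congr (ladder _ w); apply: eq_map => i; rewrite mxE.
- move=> u v eq_uv; apply/rowP => i; apply: rhow_powz_inj.
  apply: (ladder_inj (s := enum 'I_n)); last by rewrite mem_enum.
  move=> w; have := congr1 (fun f => f w) eq_uv.
  by rewrite /= !act_ladder_word; apply.
Qed.
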